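(* Let $G=G(n_1,n_2,p)$ where $1\ll n_1=\lambda n_2$ for a constant $0<\lambda\leq 1$, and $(n_1n_2)^{-\frac12}\ll p\ll (n_1n_2)^{-\frac12+o(1)}$. Then whp $f(G)=o(pn_1n_2)$.
   Context: $G(n_1,n_2,p)$ is the binomial random bipartite graph: each edge of $K_{n_1,n_2}$ is present independently with probability $p$. $f(G)$ denotes the number of faces of $G$ when embedded on an orientable surface of minimal genus. The notation $f\ll g$ means $f/g\to0$; ''whp'' means with probability tending to $1$ as $n_1\to\infty$. *)

From HB Require Import structures.
From mathcomp Require Import all_boot all_order all_algebra all_fingroup.
From mathcomp Require Import all_classical all_reals all_analysis.
Set Implicit Arguments. Unset Strict Implicit. Unset Printing Implicit Defensive.
Import Order.TTheory GRing.Theory Num.Theory.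

(* A spanning subgraph of K_{n1,n2} is given by its edge set
   E : {set 'I_n1 * 'I_n2}; vertices are 'I_n1 + 'I_n2. *)

(* Darts (oriented edges): (e, true) goes from the left end e.1 to the
   right end e.2, (e, false) the other way. *)
Definition dart (n1 n2 : nat) := ('I_n1 * 'I_n2 * bool)%type.

Definition dtail n1 n2 (d : dart n1 n2) : 'I_n1 + 'I_n2 :=
  if d.2 then inl d.1.1 else inr d.1.2.

Definition drev_fun n1 n2 (d : dart n1 n2) : dart n1 n2 := (d.1, ~~ d.2).

Lemma drev_funK n1 n2 : involutive (@drev_fun n1 n2).
Proof. by case=> e b; rewrite /drev_fun /= negbK. Qed.

Definition drev n1 n2 : {perm dart n1 n2} := perm (inv_inj (@drev_funK n1 n2)).

Definition in_graph n1 n2 (E : {set 'I_n1 * 'I_n2}) (d : dart n1 n2) : bool :=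
  d.1 \in E.

(* A rotation system of the graph E: a permutation s of the darts that fixes
   the darts not in E, maps each dart of E to a dart of E with the same tail,
   and acts as a single cycle on the darts at each vertex (the cyclic order
   of the darts around that vertex). *)
Definition rotation_system n1 n2 (E : {set 'I_n1 * 'I_n2})
    (s : {perm dart n1 n2}) : bool :=
  [forall d, (~~ in_graph E d ==> (s d == d)) &&
             (in_graph E d ==> in_graph E (s d) && (dtail (s d) == dtail d))]
  && [forall d, forall d',
        [&& in_graph E d, in_graph E d' & dtail d == dtail d'] ==>
        (d' \in porbit s d)].

(* Face-tracing permutation d |-> s (rev d); (drev * s) d = s (drev d). *)
Definition face_perm n1 n2 (s : {perm dart n1 n2}) : {perm dart n1 n2} :=
  drev n1 n2 * s.

Definition nfaces n1 n2 (E : {set 'I_n1 * 'I_n2}) (s : {perm dart n1 n2}) : nat :=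
  #|[set porbit (face_perm s) d | d in [pred d | in_graph E d]]|.

(* f(G): number of faces of a minimal-genus orientable embedding, i.e.
   (Heffter--Edmonds) the maximum number of faces over all rotation systems. *)
Definition min_genus_faces n1 n2 (E : {set 'I_n1 * 'I_n2}) : nat :=
  \max_(s : {perm dart n1 n2} | rotation_system E s) nfaces E s.

Definition bip_weight (R : realType) n1 n2 (p : R) (E : {set 'I_n1 * 'I_n2}) : R :=
  (p ^+ #|E| * (1 - p) ^+ (n1 * n2 - #|E|))%R.

Definition bip_prob (R : realType) n1 n2 (p : R)
    (P : pred {set 'I_n1 * 'I_n2}) : R :=
  (\sum_(E : {set 'I_n1 * 'I_n2} | P E) bip_weight p E)%R.

(* Fix L. In any rotation system, a face either contains a backtracking dart
   (at most n1 + n2 such faces, since the head of a backtracking dart has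
   degree one), or is a face of length at most L without backtracking, whose
   boundary walk then contains a cycle of length at most L starting at one of
   its darts, or has length greater than L (at most 2|E| / (L + 1) such faces).
   Hence f(G) <= n1 + n2 + C_L + 2|E| / (L + 1), where C_L counts cycles of
   length at most L. In G(n1, n2, p), E[C_L] <= sum_(m <= L) ((n1 + n2) p)^m and
   E|E| = p n1 n2, so by Markov's inequality
     P(f(G) > delta p N) <= 2 / (delta p N) * sum_(m <= L) ((n1 + n2) p)^m
                            + 4 / (delta (L + 1)),   N = n1 n2.
   The second term is small for large L. Writing s = p sqrt N, we have
   n1 + n2 = c sqrt N for a constant c, so the first term is O(s^L / sqrt N),
   and s <= N^eps with eps -> 0 gives s^(4L) <= N eventually, hence
   s^L / sqrt N <= N^(-1/4) -> 0. *)

From HB Require Import structures.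
From mathcomp Require Import all_boot all_order all_algebra all_fingroup.
From mathcomp Require Import all_classical all_reals all_analysis.
From mathcomp Require Import zify ring lra.
Import Order.TTheory GRing.Theory Num.Theory numFieldNormedType.Exports.
Set Implicit Arguments. Unset Strict Implicit. Unset Printing Implicit Defensive.

(** * Orbits of a permutation *)

Section PermOrbits.
Variables (T : finType) (f : {perm T}).

Lemma porbitE x y : y \in porbit f x -> porbit f y = porbit f x.
Proof. by move=> yx; apply/eqP; rewrite eq_porbit_mem. Qed.

Lemma trivIset_porbits (D : {pred T}) : finset.trivIset (porbit f @: D).
Proof.
apply/finset.trivIsetP => _ _ /imsetP[x _ ->] /imsetP[y _ ->]; apply: contraR.
case/pred0Pn => z /andP[zx zy].
by rewrite -(porbitE zx) -(porbitE zy).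
Qed.

Lemma card_porbits_meeting (O : {set {set T}}) (B : {set T}) :
  {subset O <= porbits f} -> (forall A, A \in O -> exists2 x, x \in A & x \in B) ->
  #|O| <= #|B|.
Proof.
move=> orbO meetB; apply: leq_trans (leq_imset_card (porbit f) B).
apply/subset_leq_card/fintype.subsetP => A AO.
have [x xA xB] := meetB A AO.
have /imsetP[a _ defA] := orbO A AO.
have xa : x \in porbit f a by rewrite -defA.
by apply/imsetP; exists x; rewrite // defA (porbitE xa).
Qed.

Variable D : {pred T}.
Hypothesis fD : forall x, (f x \in D) = (x \in D).

Lemma porbit_closed x y : y \in porbit f x -> (y \in D) = (x \in D).
Proof.
case/porbitP => i ->; elim: i => [|i IHi]; first by rewrite expg0 perm1.
by rewrite expgSr permM fD.
Qed.

Lemma card_long_porbits L :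
  #|[set A in porbit f @: D | L < #|A|]| * L.+1 <= #|D|.
Proof.
set O := porbit f @: D.
have coverO : finset.cover O \subset D.
  apply/bigcupsP => _ /imsetP[x xD ->]; apply/fintype.subsetP => y yx.
  by rewrite (porbit_closed yx).
rewrite -sum_nat_const.
apply: leq_trans (subset_leq_card coverO).
have -> : #|finset.cover O| = \sum_(A in O) #|A|.
  by apply/eqP; rewrite (finset.leq_card_cover O).2 trivIset_porbits.
apply: (@leq_trans (\sum_(A in [set A in O | L < #|A|]) #|A|)).
  by apply: leq_sum => A; rewrite inE => /andP[].
rewrite [X in X <= _]big_mkcond [X in _ <= X]big_mkcond /=.
by apply: leq_sum => A _; rewrite inE; case: (A \in O) => //; case: ifP.
Qed.

End PermOrbits.

(** * Darts, cycles and faces *)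

Section Darts.
Variables n1 n2 : nat.
Local Notation vertex := ('I_n1 + 'I_n2)%type.
Local Notation dart := (dart n1 n2).
Implicit Types (d x y : dart) (E : {set 'I_n1 * 'I_n2}) (s : {perm dart}).

Definition dhead d : vertex := if d.2 then inr d.1.2 else inl d.1.1.

Definition edge_of (u v : vertex) : option ('I_n1 * 'I_n2) :=
  match u, v with
  | inl a, inr b | inr b, inl a => Some (a, b)
  | _, _ => None
  end.

Definition dart_of (u v : vertex) : option dart :=
  match u, v with
  | inl a, inr b => Some ((a, b), true)
  | inr b, inl a => Some ((a, b), false)
  | _, _ => None
  end.

Lemma edge_of_dart d : edge_of (dtail d) (dhead d) = Some d.1.
Proof. by case: d => [[a b] []]. Qed.

Lemma dart_of_dart d : dart_of (dtail d) (dhead d) = Some d.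
Proof. by case: d => [[a b] []]. Qed.

Lemma dtail_neq_dhead d : dtail d != dhead d.
Proof. by case: d => [[a b] []]. Qed.

Lemma dart_ends_inj x y : dtail x = dtail y -> dhead x = dhead y -> x = y.
Proof. by case: x => [[a b] []]; case: y => [[a' b'] []] //= [->] [->]. Qed.

Lemma drevE d : drev n1 n2 d = (d.1, ~~ d.2).
Proof. by rewrite permE. Qed.

Lemma in_graph_drev E d : in_graph E (drev n1 n2 d) = in_graph E d.
Proof. by rewrite /in_graph drevE. Qed.

Lemma dtail_drev d : dtail (drev n1 n2 d) = dhead d.
Proof. by rewrite drevE; case: d => [[a b] []]. Qed.

Lemma dhead_drev d : dhead (drev n1 n2 d) = dtail d.
Proof. by rewrite drevE; case: d => [[a b] []]. Qed.

Lemma face_permE s d : face_perm s d = s (drev n1 n2 d).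
Proof. by rewrite permM. Qed.

Lemma card_in_graph E : #|[pred d : dart | in_graph E d]| = 2 * #|E|.
Proof.
rewrite (@eq_card _ _ (finset.setX E [set: bool])); last first.
  by case=> e b; rewrite !inE andbT.
by rewrite finset.cardsX cardsT card_bool mulnC.
Qed.

End Darts.

Lemma card_set_sum (T : finType) (P : pred T) : #|[set x | P x]| = \sum_x (P x : nat).
Proof. by rewrite -sum1dep_card big_mkcond. Qed.

Lemma first_repeat (T : eqType) (u : nat -> T) l : 0 < l -> u l = u 0 ->
  exists i j, [/\ i < j <= l, u i = u j & {in [pred k | k < j] &, injective u}].
Proof.
move=> l_gt0 ul.
pose P j := [exists i : 'I_j, u i == u j].
have Pl : P l by apply/existsP; exists (Ordinal l_gt0); rewrite ul.
have [j /existsP[[i ij] /eqP uij] minj] := ex_minnP (ex_intro P l Pl).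
exists i, j; split => //; first by rewrite ij minj.
have early_repeat k k' : k < k' -> u k = u k' -> j <= k'.
  by move=> kk' ukk'; apply: minj; apply/existsP; exists (Ordinal kk'); rewrite ukk'.
move=> k k'; rewrite !inE => kj k'j ukk'.
case: (ltngtP k k') => // [/early_repeat | /early_repeat]; first by move/(_ ukk'); lia.
by move/(_ (esym ukk')); lia.
Qed.

Lemma ordSS_neq m (k : 'I_m) : 2 < m -> ordS (ordS k) != k.
Proof.
move=> m_gt2; apply/eqP => /(congr1 val) /=.
move: (nat_of_ord k) (ltn_ord k) => {}k km.
case: (ltngtP k.+1 m) => [k1m | ? | mk]; [| lia | by rewrite -mk modnn modn_small; lia].
rewrite (modn_small k1m).
case: (ltngtP k.+2 m) => [k2m | ? | mk]; last by rewrite -mk modnn; lia.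
- by rewrite modn_small //; lia.
- lia.
Qed.

Section Cycles.
Variables n1 n2 : nat.
Local Notation vertex := ('I_n1 + 'I_n2)%type.
Local Notation dart := (dart n1 n2).
Implicit Types (E : {set 'I_n1 * 'I_n2}) (d : dart).

Lemma edge_of_inj (u v u' v' : vertex) e :
  edge_of u v = Some e -> edge_of u' v' = Some e ->
  (u = u' /\ v = v') \/ (u = v' /\ v = u').
Proof.
by case: u => a; case: v => b; case: u' => a'; case: v' => b' //= [<-] [-> ->];
  [left | right | right | left].
Qed.

Definition is_cycle m (t : m.-tuple vertex) : bool :=
  [&& 2 < m, injectiveb (tnth t) &
      [forall k, edge_of (tnth t k) (tnth t (ordS k)) != None]].

Definition cycle_edges m (t : m.-tuple vertex) : {set 'I_n1 * 'I_n2} :=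
  [set e | [exists k, edge_of (tnth t k) (tnth t (ordS k)) == Some e]].

Definition cycle_in E m (t : m.-tuple vertex) : bool :=
  is_cycle t && (cycle_edges t \subset E).

(* A cycle of length m is represented by each of its 2m rotations and reflections;
   the over-count is harmless since only upper bounds on cycle counts are needed. *)
Definition cycle_start m (t : m.-tuple vertex) d : bool :=
  [exists k : 'I_m, (val k == 0) && (dart_of (tnth t k) (tnth t (ordS k)) == Some d)].

Definition starts_short_cycle L E d : bool :=
  [exists m : 'I_L.+1, exists t : m.-tuple vertex, cycle_in E t && cycle_start t d].

Definition short_cycle_count L E : nat :=
  \sum_(m < L.+1) #|[set t : m.-tuple vertex | cycle_in E t]|.

Lemma card_cycle_start m (t : m.-tuple vertex) : #|[set d | cycle_start t d]| <= 1.
Proof.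
apply/card_le1_eqP => d d'; rewrite !inE.
move=> /existsP[k /andP[/eqP k0 /eqP td]] /existsP[k' /andP[/eqP k'0 /eqP td']].
have kk' : k = k' by apply: val_inj; rewrite k0 k'0.
by move: td'; rewrite -kk' td => -[].
Qed.

Lemma card_starts_short_cycle L E :
  #|[set d | starts_short_cycle L E d]| <= short_cycle_count L E.
Proof.
rewrite card_set_sum.
apply: (@leq_trans (\sum_d \sum_(m < L.+1) \sum_(t : m.-tuple vertex)
                       (cycle_in E t && cycle_start t d : nat))).
  apply: leq_sum => d _.
  case: (boolP (starts_short_cycle L E d)) => // /existsP[m /existsP[t mtd]].
  by rewrite (bigD1 m) //= (bigD1 t) //= mtd -addnA leq_addr.
rewrite exchange_big /=; apply: leq_sum => m _; rewrite card_set_sum exchange_big /=.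
apply: leq_sum => t _; case: (cycle_in E t); last by rewrite big1.
by rewrite -card_set_sum; exact: card_cycle_start.
Qed.

Lemma card_cycle_edges m (t : m.-tuple vertex) : is_cycle t -> m <= #|cycle_edges t|.
Proof.
case/and3P => m_gt2 /injectiveP tinj /forallP t_edges.
pose g k := edge_of (tnth t k) (tnth t (ordS k)).
have ginj : injective g.
  move=> k k' gkk'; have := t_edges k; rewrite -/(g k).
  case gk: (g k) gkk' => [e|] // gk' _.
  case: (edge_of_inj gk (esym gk')) => [[/tinj //] | [/tinj k_Sk' /tinj Sk_k']].
  by have := ordSS_neq k m_gt2; rewrite Sk_k' -k_Sk' eqxx.
rewrite -(card_imset (cycle_edges t) (@Some_inj _)).
apply: (@leq_trans #|g @: [set: 'I_m]|); first by rewrite card_imset // cardsT card_ord.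
apply: subset_leq_card.
apply/fintype.subsetP => _ /imsetP[k _ ->]; have := t_edges k; rewrite -/(g k).
case gk: (g k) => [e|] // _; apply: imset_f.
by rewrite inE; apply/existsP; exists k; rewrite -/(g k) gk.
Qed.

Lemma closed_walk_cycle E (u : nat -> vertex) i j d :
  (forall k, exists2 e, e \in E & edge_of (u k) (u k.+1) = Some e) ->
  2 < j - i -> u i = u j -> {in [pred k | k < j] &, injective u} ->
  dart_of (u i) (u i.+1) = Some d ->
  exists t : (j - i).-tuple vertex, cycle_in E t && cycle_start t d.
Proof.
move=> walkE gap uij uinj ud.
exists [tuple u (i + k) | k < j - i]; set t := [tuple u (i + k) | k < j - i].
have tS (k : 'I_(j - i)) : tnth t (ordS k) = u (i + k).+1.
  rewrite tnth_mktuple /=; have := ltn_ord k.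
  case: (ltngtP k.+1 (j - i)) => [kj _ | // | kj _]; first by rewrite modn_small // addnS.
  by rewrite kj modnn addn0 -addnS kj subnKC // ltnW // -subn_gt0; lia.
have t_edge k : exists2 e, e \in E & edge_of (tnth t k) (tnth t (ordS k)) = Some e.
  by rewrite tS tnth_mktuple; apply: walkE.
apply/andP; split; last first.
  apply/existsP; have j_gt0 : 0 < j - i by lia.
  by exists (Ordinal j_gt0); rewrite /= tS tnth_mktuple addn0 ud.
apply/andP; split; last first.
  apply/fintype.subsetP => e; rewrite inE => /existsP[k /eqP].
  by have [e' e'E ->] := t_edge k => -[<-].
apply/and3P; split => //.
  apply/injectiveP => k k'; rewrite !tnth_mktuple => /uinj ukk'.
  apply: val_inj; suff : i + k = i + k' by move/addnI.
  by apply: ukk'; rewrite inE; have := ltn_ord k; have := ltn_ord k'; lia.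
by apply/forallP => k; have [e _ ->] := t_edge k.
Qed.

End Cycles.

Section Faces.
Variables n1 n2 : nat.
Local Notation vertex := ('I_n1 + 'I_n2)%type.
Local Notation dart := (dart n1 n2).

Variables (E : {set 'I_n1 * 'I_n2}) (s : {perm dart}).
Hypothesis rsE : rotation_system E s.
Local Notation f := (face_perm s).

Lemma in_graph_rot d : in_graph E (s d) = in_graph E d.
Proof.
case/andP: rsE => /forallP/(_ d)/andP[fixd inE_s] _.
case Ed: (in_graph E d).
  by move: inE_s; rewrite Ed => /andP[].
by move: fixd; rewrite Ed => /eqP ->.
Qed.

Lemma dtail_rot d : in_graph E d -> dtail (s d) = dtail d.
Proof.
by case/andP: rsE => /forallP/(_ d)/andP[_ /implyP h] _ /h/andP[_ /eqP].
Qed.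

Lemma rot_porbit d d' : in_graph E d -> in_graph E d' -> dtail d = dtail d' ->
  d' \in porbit s d.
Proof.
case/andP: rsE => _ /forallP/(_ d)/forallP/(_ d')/implyP h Ed Ed' tdd'.
by apply: h; rewrite Ed Ed' tdd' eqxx.
Qed.

Lemma in_graph_face d : in_graph E (f d) = in_graph E d.
Proof. by rewrite face_permE in_graph_rot in_graph_drev. Qed.

Lemma dtail_face d : in_graph E d -> dtail (f d) = dhead d.
Proof. by move=> Ed; rewrite face_permE dtail_rot ?in_graph_drev // dtail_drev. Qed.

(* If f x = drev x then s fixes drev x, so the head of x has degree one. *)
Lemma face_backtrack_inj x y : in_graph E x -> in_graph E y ->
  f x = drev n1 n2 x -> f y = drev n1 n2 y -> dhead x = dhead y -> x = y.
Proof.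
rewrite !face_permE => Ex Ey fx fy hxy.
have : drev n1 n2 y \in porbit s (drev n1 n2 x).
  by apply: rot_porbit; rewrite ?in_graph_drev // !dtail_drev.
by case/porbitP => i; rewrite permX_fix // => /perm_inj.
Qed.

Definition backtracks : {set dart} := [set x | in_graph E x & f x == drev n1 n2 x].

Lemma card_backtracks : #|backtracks| <= n1 + n2.
Proof.
have <- : #|{: vertex}| = n1 + n2 by rewrite card_sum !card_ord.
apply: leq_card_in => x y.
rewrite !inE => /andP[Ex /eqP fx] /andP[Ey /eqP fy].
exact: face_backtrack_inj.
Qed.

Lemma short_face_cycle L a : in_graph E a -> #|porbit f a| <= L ->
  [disjoint porbit f a & backtracks] ->
  exists2 d, d \in porbit f a & starts_short_cycle L E d.
Proof.
move=> Ea short nobt.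
pose w k := (f ^+ k)%g a; pose u k := dtail (w k).
have wS k : w k.+1 = f (w k) by rewrite /w expgSr permM.
have Ew k : in_graph E (w k).
  by elim: k => [|k IHk]; rewrite ?wS ?in_graph_face // /w expg0 perm1.
have uS k : u k.+1 = dhead (w k) by rewrite /u wS dtail_face.
have walkE k : exists2 e, e \in E & edge_of (u k) (u k.+1) = Some e.
  by exists (w k).1; rewrite ?uS ?edge_of_dart //; apply: Ew.
have orbit_gt0 : 0 < #|porbit f a| by rewrite lt0n card_porbit_neq0.
have u_closed : u #|porbit f a| = u 0 by rewrite /u /w permX iter_porbit expg0 perm1.
have [i [j [/andP[ij jl] uij uinj]]] := first_repeat orbit_gt0 u_closed.
(* The walk never repeats a vertex after one step (darts join distinct
   vertices) nor after two steps (no backtracking). *)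
have gap : 2 < j - i.
  have no_loop : u i.+1 != u i by rewrite uS eq_sym dtail_neq_dhead.
  have no_backtrack : u i.+2 != u i.
    apply/eqP => ui2; move: (disjointFr nobt (mem_porbit f i a)).
    rewrite /backtracks inE (Ew i) /= => /negbT/eqP; apply; apply: dart_ends_inj.
      by rewrite dtail_face ?dtail_drev //; apply: Ew.
    by rewrite dhead_drev -wS -uS ui2.
  rewrite ltnNge; apply/negP => ji_le2.
  have [ji1 | ji2] : j = i.+1 \/ j = i.+2 by lia.
  - by move: no_loop; rewrite -ji1 uij eqxx.
  - by move: no_backtrack; rewrite -ji2 uij eqxx.
have ji_small : j - i < L.+1 by lia.
exists (w i); first exact: mem_porbit.
have ud : dart_of (u i) (u i.+1) = Some (w i) by rewrite uS dart_of_dart.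
have [t cycle_t] := closed_walk_cycle walkE gap uij uinj ud.
by apply/existsP; exists (Ordinal ji_small); apply/existsP; exists t.
Qed.

Lemma nfaces_le L :
  nfaces E s * L.+1 <= (n1 + n2 + short_cycle_count L E) * L.+1 + 2 * #|E|.
Proof.
rewrite /nfaces; set D := [pred d | in_graph E d]; set O := porbit f @: D.
set Obt := [set A in O | ~~ [disjoint A & backtracks]].
set Ocyc := [set A in O | [disjoint A & backtracks] && (#|A| <= L)].
set Olong := [set A in O | L < #|A|].
have O_split : #|O| <= #|Obt| + #|Ocyc| + #|Olong|.
  apply: (@leq_trans #|Obt :|: Ocyc :|: Olong|).
    apply/subset_leq_card/fintype.subsetP => A AO; rewrite !inE AO /=.
    by case: [disjoint A & backtracks]; case: leqP.
  apply: leq_trans (leq_card_setU _ _).1 _; rewrite leq_add2r.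
  exact: (leq_card_setU _ _).1.
have orbits (O' : {set {set dart}}) : {subset O' <= O} -> {subset O' <= porbits f}.
  by move=> O'O A /O'O /imsetP[a _ ->]; apply: imset_f.
have Obt_le : #|Obt| <= n1 + n2.
  apply: leq_trans card_backtracks; apply: card_porbits_meeting.
    by apply: orbits => A; rewrite inE => /andP[].
  by move=> A; rewrite inE => /andP[_ /pred0Pn[x /andP[xA xB]]]; exists x.
have Ocyc_le : #|Ocyc| <= short_cycle_count L E.
  apply: leq_trans (card_starts_short_cycle L E); apply: card_porbits_meeting.
    by apply: orbits => A; rewrite inE => /andP[].
  move=> A; rewrite inE => /and3P[/imsetP[a Ea ->] nobt short].
  by have [d ad cyc_d] := short_face_cycle Ea short nobt; exists d; rewrite ?inE.
have Olong_le : #|Olong| * L.+1 <= 2 * #|E|.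
  by rewrite -card_in_graph; apply: card_long_porbits => d; rewrite !inE in_graph_face.
have := leq_mul O_split (leqnn L.+1); nia.
Qed.

End Faces.

Lemma min_genus_faces_le n1 n2 (E : {set 'I_n1 * 'I_n2}) L :
  min_genus_faces E * L.+1 <= (n1 + n2 + short_cycle_count L E) * L.+1 + 2 * #|E|.
Proof.
rewrite /min_genus_faces; elim/big_ind: _ => //; last by move=> s rs; apply: nfaces_le.
by move=> x y hx hy; rewrite maxnMl geq_max hx hy.
Qed.

(** * The random bipartite graph *)

Local Open Scope ring_scope.

Lemma markov_sum (R : realFieldType) (I : finType) (w X : I -> R) (a : R) :
  0 < a -> (forall i, 0 <= w i) -> (forall i, 0 <= X i) ->
  \sum_(i | a <= X i) w i <= (\sum_i w i * X i) / a.
Proof.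
move=> a_gt0 w_ge0 X_ge0; rewrite ler_pdivlMr // big_distrl /=.
rewrite [X in _ <= X](bigID (fun i => a <= X i)) /= -[X in X <= _]addr0.
apply: lerD; last by apply: sumr_ge0 => i _; apply: mulr_ge0.
by apply: ler_sum => i aX; apply: ler_wpM2l.
Qed.

Section BinomialBipartite.
Variables (R : realType) (n1 n2 : nat) (p : R).
Local Notation graph := {set 'I_n1 * 'I_n2}.
Implicit Types (E S : graph) (P Q : pred graph).

Definition bip_exp (X : graph -> R) : R := \sum_E bip_weight p E * X E.

Lemma bip_weightE E : bip_weight p E = \prod_e (if e \in E then p else 1 - p).
Proof.
rewrite /bip_weight (bigID (mem E)) /=.
rewrite [X in _ = X * _](eq_bigr (fun=> p)) => [|e -> //].
rewrite [X in _ = _ * X](eq_bigr (fun=> 1 - p)) => [|e /negbTE -> //].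
rewrite !prodr_const; congr (_ * _ ^+ _).
have := cardsC E; rewrite card_prod !card_ord => <-.
by rewrite addKn; apply: eq_card => e; rewrite !inE.
Qed.

Lemma bip_prob_subset S : bip_prob p (fun E => S \subset E) = p ^+ #|S|.
Proof.
rewrite /bip_prob big_mkcond /=.
rewrite (eq_bigr (fun E => \prod_e (if e \in E then p else if e \in S then 0 else 1 - p))).
  rewrite -(@bigA_distr R 0 1 *%R +%R _ (fun=> p)) -[RHS]prodr_const [RHS]big_mkcond.
  by apply: eq_bigr => e _; case: (e \in S); rewrite /= ?addr0 // subrKC.
move=> E _; case: ifP => [/fintype.subsetP SE | /negbT/fintype.subsetPn[e eS eE]].
  rewrite bip_weightE; apply: eq_bigr => e _.
  by case: ifP => // eE; case: ifP => // /SE; rewrite eE.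
by rewrite (bigD1 e) //= (negbTE eE) eS mul0r.
Qed.

Lemma bip_prob_total : \sum_(E : graph) bip_weight p E = 1.
Proof.
have := bip_prob_subset finset.set0; rewrite cards0 expr0 => <-.
by apply: eq_bigl => E; rewrite finset.sub0set.
Qed.

Lemma bip_probC P : bip_prob p [pred E | ~~ P E] = 1 - bip_prob p P.
Proof. by rewrite -bip_prob_total (bigID P) /= /bip_prob; lra. Qed.

Lemma bip_exp_count (I : finType) (P : pred I) (S : I -> graph) :
  bip_exp (fun E => #|[set i | P i && (S i \subset E)]|%:R) = \sum_(i | P i) p ^+ #|S i|.
Proof.
rewrite /bip_exp; under eq_bigr => E _ do rewrite card_set_sum natr_sum big_distrr /=.
rewrite exchange_big /= [RHS]big_mkcond /=; apply: eq_bigr => i _.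
case: (P i); last by rewrite big1 // => E _; rewrite mulr0.
rewrite -bip_prob_subset /bip_prob [RHS]big_mkcond.
by apply: eq_bigr => E _; case: ifP; rewrite ?mulr1 ?mulr0.
Qed.

Lemma bip_exp_card : bip_exp (fun E => #|E|%:R) = p * (n1 * n2)%:R.
Proof.
have -> : bip_exp (fun E => #|E|%:R) =
    bip_exp (fun E => #|[set e | true && ([set e] \subset E)]|%:R).
  apply: eq_bigr => E _; congr (_ * _%:R).
  by apply: eq_card => e; rewrite !inE finset.sub1set.
rewrite bip_exp_count /= (eq_bigr (fun=> p)) => [|e _]; last by rewrite cards1.
by rewrite sumr_const card_prod !card_ord mulr_natr.
Qed.

Lemma bip_expD X Y : bip_exp (fun E => X E + Y E) = bip_exp X + bip_exp Y.
Proof. by rewrite -big_split; apply: eq_bigr => E _; rewrite mulrDr. Qed.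

Lemma bip_expZ c X : bip_exp (fun E => c * X E) = c * bip_exp X.
Proof. by rewrite /bip_exp big_distrr; apply: eq_bigr => E _; rewrite mulrCA. Qed.

Lemma bip_exp_sum (I : Type) (r : seq I) (X : I -> graph -> R) :
  bip_exp (fun E => \sum_(i <- r) X i E) = \sum_(i <- r) bip_exp (X i).
Proof.
rewrite /bip_exp exchange_big /=; apply: eq_bigr => E _.
by rewrite big_distrr.
Qed.

Hypothesis p01 : 0 <= p <= 1.

Lemma bip_weight_ge0 E : 0 <= bip_weight p E.
Proof. by case/andP: p01 => p_ge0 p_le1; rewrite mulr_ge0 ?exprn_ge0 ?subr_ge0. Qed.

Lemma bip_prob_ge0 P : 0 <= bip_prob p P.
Proof. by apply: sumr_ge0 => E _; apply: bip_weight_ge0. Qed.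

Lemma bip_prob_le P Q : (forall E, P E -> Q E) -> bip_prob p P <= bip_prob p Q.
Proof.
move=> PQ; rewrite /bip_prob [X in X <= _]big_mkcond [X in _ <= X]big_mkcond /=.
apply: ler_sum => E _; case: ifP => [/PQ -> // | _]; case: ifP => _ //.
exact: bip_weight_ge0.
Qed.

Lemma bip_exp_cycles m :
  bip_exp (fun E => #|[set t : m.-tuple ('I_n1 + 'I_n2) | cycle_in E t]|%:R)
    <= ((n1 + n2)%:R * p) ^+ m.
Proof.
case/andP: p01 => p_ge0 p_le1; rewrite /cycle_in bip_exp_count.
apply: (@le_trans _ _ (\sum_(t : m.-tuple ('I_n1 + 'I_n2) | is_cycle t) p ^+ m)).
  by apply: ler_sum => t /card_cycle_edges m_le; apply: ler_wiXn2l.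
apply: (@le_trans _ _ (\sum_(t : m.-tuple ('I_n1 + 'I_n2)) p ^+ m)).
  rewrite [X in _ <= X](bigID (@is_cycle n1 n2 m)) /= lerDl.
  by apply: sumr_ge0 => t _; apply: exprn_ge0.
by rewrite sumr_const card_tuple card_sum !card_ord exprMn -natrX mulr_natl.
Qed.

Lemma bip_exp_short_cycles L :
  bip_exp (fun E => (short_cycle_count L E)%:R) <= \sum_(m < L.+1) ((n1 + n2)%:R * p) ^+ m.
Proof.
under [X in bip_exp X]funext => E do rewrite /short_cycle_count natr_sum.
by rewrite bip_exp_sum; apply: ler_sum => m _; apply: bip_exp_cycles.
Qed.

End BinomialBipartite.

Section ManyFaces.
Variables (R : realType) (n1 n2 : nat) (p : R).
Hypothesis p01 : 0 <= p <= 1.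
Local Notation V := ((n1 + n2)%:R : R).

Lemma min_genus_faces_ler (E : {set 'I_n1 * 'I_n2}) L :
  (min_genus_faces E)%:R <= V + (short_cycle_count L E)%:R + 2 / L.+1%:R * #|E|%:R :> R.
Proof.
have := min_genus_faces_le E L; rewrite -(ler_nat R) !(natrD, natrM) => faces_le.
have l_gt0 : 0 < L.+1%:R :> R by rewrite ltr0Sn.
by rewrite -(ler_pM2r l_gt0) mulrDl mulrAC divfK ?gt_eqF // natrD.
Qed.

Lemma faces_tail_le L (a : R) : 0 < a -> 2 * V <= a ->
  1 - bip_prob p (fun E : {set 'I_n1 * 'I_n2} => (min_genus_faces E)%:R <= a) <=
  2 / a * (\sum_(m < L.+1) (V * p) ^+ m + 2 / L.+1%:R * (p * (n1 * n2)%:R)).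
Proof.
move=> a_gt0 Va.
pose X (E : {set 'I_n1 * 'I_n2}) : R :=
  (short_cycle_count L E)%:R + 2 / L.+1%:R * #|E|%:R.
have X_ge0 E : 0 <= X E by rewrite addr_ge0 // mulr_ge0 // divr_ge0.
(* Markov's inequality for X, which is at least a / 2 whenever f(G) > a >= 2 V. *)
rewrite -bip_probC; apply: (@le_trans _ _ (bip_prob p [pred E | a / 2 <= X E])).
  apply: bip_prob_le => // E; rewrite /= -ltNge => many_faces.
  have := min_genus_faces_ler E L; rewrite /X; move: (2 / _ * _) => y; lra.
apply: le_trans (markov_sum _ (bip_weight_ge0 p01) X_ge0) _; first by lra.
rewrite -/(bip_exp p X) bip_expD bip_expZ bip_exp_card invf_div mulrC.
rewrite ler_pM2l ?divr_gt0 //; apply: lerD => //; exact: bip_exp_short_cycles.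
Qed.

End ManyFaces.

(** * Asymptotics *)

Lemma sum_expr_le (R : realDomainType) (x : R) n :
  1 <= x -> \sum_(m < n.+1) x ^+ m <= n.+1%:R * x ^+ n.
Proof.
move=> x_ge1; rewrite mulr_natl -[X in _ *+ X]card_ord -sumr_const.
by apply: ler_sum => m _; apply: ler_weXn2l; rewrite // -ltnS.
Qed.

Lemma expr_le_of_le_powR (R : realType) (s x e : R) n :
  1 <= x -> 0 <= s -> s <= x `^ e -> e * n%:R <= 1 -> s ^+ n <= x.
Proof.
move=> x_ge1 s_ge0 s_le en_le1.
apply: (@le_trans _ _ ((x `^ e) ^+ n)); first by apply: lerXn2r; rewrite ?nnegrE ?powR_ge0.
rewrite -powR_mulrn ?powR_ge0 // -powRrM -[X in _ <= X]powRr1 ?(le_trans ler01) //.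
exact: ler_powR.
Qed.

Lemma sqrt_ratio_ge1 (R : realType) (lambda : R) :
  0 < lambda <= 1 -> 1 <= (1 + lambda) / Num.sqrt lambda.
Proof.
case/andP=> l_gt0 l_le1; have : Num.sqrt lambda <= 1 by rewrite -sqrtr1 ler_sqrt.
by rewrite ler_pdivlMr ?sqrtr_gt0 // mul1r; lra.
Qed.

Lemma sqrt_natM_eq (R : realType) (lambda : R) (n1 n2 : nat) :
  0 < lambda -> n1%:R = lambda * n2%:R ->
  (n1 + n2)%:R = (1 + lambda) / Num.sqrt lambda * Num.sqrt (n1 * n2)%:R :> R.
Proof.
move=> l_gt0 n1E; have sl_gt0 : 0 < Num.sqrt lambda by rewrite sqrtr_gt0.
rewrite natrM n1E -[lambda * _ * _]mulrA sqrtrM ?ltW // -expr2 sqrtr_sqr ger0_norm ?ler0n //.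
by rewrite natrD n1E; field; rewrite gt_eqF.
Qed.

Lemma mulrn_le1_of_norm_lt (R : realFieldType) (x : R) n :
  `|x| < (n.+1%:R)^-1 -> x * n%:R <= 1.
Proof.
move=> x_small; have := ler_norm x; have := normr_ge0 x; have := ler0n R n.
by rewrite -[_^-1]mul1r ltr_pdivlMr ?ltr0Sn // -natr1 in x_small; nra.
Qed.

Lemma short_cycle_term_le (R : realFieldType) (c s r d : R) L :
  1 <= c -> 1 <= s -> 0 < r -> 0 < d ->
  2 / (d * s * r) * \sum_(m < L.+1) (c * s) ^+ m
    <= 2 * L.+1%:R * c ^+ L / d * (s ^+ L / r).
Proof.
move=> c_ge1 s_ge1 r_gt0 d_gt0; have s_gt0 : 0 < s by apply: lt_le_trans ltr01 _.
have c_gt0 : 0 < c by apply: lt_le_trans ltr01 _.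
apply: le_trans (ler_wpM2l _ (sum_expr_le _ _)) _.
- by rewrite divr_ge0 // ltW // !mulr_gt0.
- by rewrite -[1]mulr1 ler_pM.
have -> : 2 / (d * s * r) * (L.+1%:R * (c * s) ^+ L) =
    2 * L.+1%:R * c ^+ L / d * (s ^+ L / r) / s.
  by rewrite exprMn; field; rewrite !gt_eqF.
by rewrite ler_pdivrMr // ler_peMr // !mulr_ge0 ?invr_ge0 ?divr_ge0 ?exprn_ge0 ?ltW.
Qed.

Lemma ratio_lt_of_pow4 (R : realFieldType) (s r y : R) L :
  0 <= s -> 0 < r -> 0 < y ->
  s ^+ (4 * L) <= r ^+ 2 -> (y^-1) ^+ 4 < r ^+ 2 -> s ^+ L / r < y.
Proof.
move=> s_ge0 r_gt0 y_gt0 s4L_le yr.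
rewrite -(@ltr_pXn2r _ 4) ?nnegrE ?(ltW y_gt0) ?divr_ge0 ?exprn_ge0 ?(ltW r_gt0) //.
rewrite expr_div_n -exprM mulnC.
apply: (@le_lt_trans _ _ (r ^+ 2 / r ^+ 4)).
  by rewrite ler_pM2r ?invr_gt0 ?exprn_gt0.
have -> : r ^+ 2 / r ^+ 4 = (r ^+ 2)^-1 by field; rewrite gt_eqF.
by rewrite -[y ^+ 4]invrK ltf_pV2 ?posrE ?invr_gt0 ?exprn_gt0 // -exprVn.
Qed.

Lemma short_cycle_term_lt (R : realFieldType) (c s r d e : R) L :
  1 <= c -> 1 <= s -> 0 < r -> 0 < d -> 0 < e ->
  s ^+ (4 * L) <= r ^+ 2 -> (4 * L.+1%:R * c ^+ L / (d * e)) ^+ 4 < r ^+ 2 ->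
  2 / (d * s * r) * \sum_(m < L.+1) (c * s) ^+ m < e / 2.
Proof.
move=> c_ge1 s_ge1 r_gt0 d_gt0 e_gt0 s4L r_big.
apply: le_lt_trans (short_cycle_term_le _ c_ge1 s_ge1 r_gt0 d_gt0) _.
have c_gt0 : 0 < c by apply: lt_le_trans c_ge1.
have K_gt0 : 0 < 2 * L.+1%:R * c ^+ L / d by rewrite !mulr_gt0 ?invr_gt0 ?exprn_gt0.
have y_gt0 : 0 < e / 2 / (2 * L.+1%:R * c ^+ L / d).
  by apply: divr_gt0 => //; apply: divr_gt0.
rewrite [X in X < _]mulrC -ltr_pdivlMr //.
apply: ratio_lt_of_pow4 r_gt0 y_gt0 s4L _; first exact: le_trans s_ge1.
suff -> : (e / 2 / (2 * L.+1%:R * c ^+ L / d))^-1 = 4 * L.+1%:R * c ^+ L / (d * e) by [].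
by field; rewrite !gt_eqF ?exprn_gt0.
Qed.

Lemma mul_sqrt_le_powR (R : realType) (x p e : R) :
  0 < x -> p / x `^ (- 2^-1 + e) < 1 -> p * Num.sqrt x <= x `^ e.
Proof.
move=> x_gt0; rewrite ltr_pdivrMr ?powR_gt0 // mul1r => p_lt.
have -> : x `^ e = x `^ (- 2^-1 + e) * Num.sqrt x.
  rewrite -powR12_sqrt ?ltW // -powRD; last by rewrite (gt_eqF x_gt0) implybT.
  by rewrite addrAC addNr add0r.
by rewrite ler_pM2r ?sqrtr_gt0 // ltW.
Qed.

Lemma faces_tail_lt (R : realType) (lambda d e p eps : R) (L n1 n2 : nat) :
  0 < lambda <= 1 -> n1%:R = lambda * n2%:R -> 0 <= p <= 1 -> 0 < d -> 0 < e ->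
  8 / (d * e) < L.+1%:R ->
  `|eps| < ((4 * L).+1%:R)^-1 ->
  p / (n1 * n2)%:R `^ (- 2^-1 + eps) < 1 ->
  1 + 2 * ((1 + lambda) / Num.sqrt lambda) / d <= p * Num.sqrt (n1 * n2)%:R ->
  1 + (4 * L.+1%:R * ((1 + lambda) / Num.sqrt lambda) ^+ L / (d * e)) ^+ 4 <= n1%:R ->
  1 - bip_prob p (fun E : {set 'I_n1 * 'I_n2} =>
                    (min_genus_faces E)%:R <= d * p * (n1 * n2)%:R) < e.
Proof.
(* With N = n1 n2, c = (1 + lambda) / sqrt lambda and s = p sqrt N, we have
   n1 + n2 = c sqrt N and d p N = d s sqrt N. *)
move=> lam01 n1E p01 d_gt0 e_gt0 L_big eps_small p_small s_big n1_big.
set c := (1 + lambda) / Num.sqrt lambda in s_big n1_big.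
set N := (n1 * n2)%:R in p_small s_big *.
set r := Num.sqrt N in s_big; set s := p * r in s_big.
set l : R := L.+1%:R in L_big n1_big *.
have l_gt0 : 0 < l by rewrite ltr0Sn.
have c_ge1 : 1 <= c := sqrt_ratio_ge1 lam01.
have /andP[lam_gt0 lam_le1] := lam01.
have n1_ge1 : 1 <= n1%:R :> R.
  by apply: le_trans n1_big; rewrite lerDl exprn_even_ge0.
have n1_le_N : n1%:R <= N.
  rewrite /N natrM ler_peMr ?ler0n //; apply: le_trans n1_ge1 _.
  by rewrite n1E ler_piMl ?ler0n.
have N_gt0 : 0 < N by apply: lt_le_trans n1_le_N; lra.
have r_gt0 : 0 < r by rewrite sqrtr_gt0.
have N_r2 : N = r ^+ 2 by rewrite sqr_sqrtr ?ltW.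
have s_ge1 : 1 <= s.
  by apply: le_trans s_big; rewrite lerDl divr_ge0 ?ltW //; lra.
have p_gt0 : 0 < p by rewrite -(pmulr_lgt0 _ r_gt0); apply: lt_le_trans s_ge1.
have a_eq : d * p * N = d * s * r by rewrite N_r2 /s; ring.
have Vp_eq : (n1 + n2)%:R * p = c * s by rewrite (sqrt_natM_eq lam_gt0 n1E) -/c -/r /s; ring.
have Va : 2 * (n1 + n2)%:R <= d * p * N.
  rewrite a_eq (sqrt_natM_eq lam_gt0 n1E) -/c -/r mulrA ler_pM2r //.
  have : 2 * c / d * d <= s * d by rewrite ler_pM2r //; lra.
  by rewrite divfK ?gt_eqF // [s * d]mulrC.
have a_gt0 : 0 < d * p * N by rewrite !mulr_gt0.
apply: le_lt_trans (faces_tail_le p01 L a_gt0 Va) _.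
rewrite mulrDr [X in _ < X](splitr e); apply: ltrD.
  rewrite Vp_eq a_eq; apply: short_cycle_term_lt => //.
    rewrite -N_r2; apply: expr_le_of_le_powR (mulrn_le1_of_norm_lt eps_small).
    - exact: le_trans n1_le_N.
    - exact: le_trans s_ge1.
    - exact: mul_sqrt_le_powR.
  rewrite -N_r2; apply: lt_le_trans n1_le_N; apply: lt_le_trans n1_big.
  by move: (_ ^+ 4) => y; lra.
have -> : 2 / (d * p * N) * (2 / l * (p * N)) = 4 / (d * l).
  rewrite -[d * p * N]mulrA; have := mulr_gt0 p_gt0 N_gt0.
  by move: (p * N) => pN pN_gt0; field; rewrite !gt_eqF.
by move: L_big; rewrite !ltr_pdivrMr ?mulr_gt0 //; lra.
Qed.

Local Open Scope classical_set_scope.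

Theorem corollary4p10 (R : realType) (lambda : R) (n1 n2 : nat -> nat)
    (p : nat -> R) :
  0 < lambda <= 1 ->
  (forall k, (n1 k)%:R = lambda * (n2 k)%:R) ->
  (fun k => (n1 k)%:R : R) @ \oo --> +oo ->
  (forall k, 0 <= p k <= 1) ->
  (fun k => p k * Num.sqrt ((n1 k * n2 k)%:R)) @ \oo --> +oo ->
  (exists eps : nat -> R, eps @ \oo --> 0 /\
     (fun k => p k / (((n1 k * n2 k)%:R : R) `^ (- 2^-1 + eps k))) @ \oo --> 0) ->
  forall delta : R, 0 < delta ->
    (fun k => bip_prob (p k)
       (fun E : {set 'I_(n1 k) * 'I_(n2 k)} =>
          (min_genus_faces E)%:R <= delta * p k * (n1 k * n2 k)%:R))
      @ \oo --> (1 : R).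
Proof.
move=> lam01 n1E n1_oo p01 s_oo [eps [eps_0 p_small]] d d_gt0.
apply/cvgrPdist_lt => e e_gt0.
(* L makes the long-face term 4 / (delta (L + 1)) smaller than e / 2. *)
pose L := Num.bound (8 / (d * e)).
have L_big : 8 / (d * e) < L.+1%:R.
  apply: lt_le_trans (archi_boundP _) _; last by rewrite ler_nat.
  by rewrite divr_ge0 // mulr_ge0 // ltW.
have eta_gt0 : 0 < ((4 * L).+1%:R)^-1 :> R by rewrite invr_gt0 ltr0Sn.
near=> k.
rewrite ger0_norm; last by rewrite -bip_probC bip_prob_ge0.
apply: (faces_tail_lt (eps := eps k) lam01 (n1E k) (p01 k) d_gt0 e_gt0 L_big).
- by near: k; apply: cvgr0_norm_lt.
- by apply: ltr_normlW; near: k; apply: cvgr0_norm_lt.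
- by near: k; apply: (cvgryPge _).1.
- by near: k; apply: (cvgryPge _).1.
Unshelve. all: by end_near.
Qed.
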